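(* Let $v$ be a node that is seed-infected at time step $t$ during the execution of the Follow algorithm (described in the context), and let $e$ be an edge adjacent to $v$ with $\lambda(e)\in\{t+1,\dots,t+\delta\}$. Then during the execution there is a round with a successful infection via $e$ (from $v$ or to $v$).
   Context: A temporal graph $\mathcal G=(V,E,\lambda)$ with lifetime $T_{\max}$ consists of a finite undirected static graph $(V,E)$ and a labeling $\lambda:E\to\{1,\dots,T_{\max}\}$; edge $e$ is present only at time $\lambda(e)$. Infection model with parameter $\delta\in\mathbb N^+$: a seed $(u,t)$ makes $u$ infected at time $t$; otherwise a susceptible node $u$ becomes infected at time $t$ iff some neighbour $v$ infectious at time $t$ has $\lambda(uv)=t$ (exactly one infector recorded if several exist). A node infected at time $t$ is infectious at times $t+1,\dots,t+\delta$ and resistant afterwards. Each round, the Discoverer submits seed infections and observes an infection log (triples $(u,v,t)$: $u$ infected $v$ at time $t$). Subroutine Explore$(u,t)$: for each $t'\in\{t-\delta-1,t-1,t\}$, if no round with seed $(u,t')$ was performed, perform a round with the single seed $(u,t')$ and record it; then for each newly observed successful infection along an edge $uv$ at time $t''$, call Explore$(v,t'')$. Algorithm Follow: pick any node $v_0$; for each $i\in[0,\lceil T_{\max}/\delta\rceil]$ perform a round with single seed $(v_0,i\delta)$; for each edge $e=v_0u$ along which an infection succeeds, call Explore$(u,\lambda(e))$. *)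

From mathcomp Require Import all_boot all_order all_algebra.
Set Implicit Arguments. Unset Strict Implicit. Unset Printing Implicit Defensive.
Import Order.TTheory GRing.Theory Num.Theory.
Local Open Scope ring_scope.

(* A temporal graph: finite undirected simple static graph (adj) with a
   labeling lab of its edges by times in {1..Tmax}.  lab u v is only
   meaningful when adj u v; edge e = {u,v} is present only at time lab u v. *)
Record tgraph (V : finType) := TGraph {
  adj : rel V;
  lab : V -> V -> nat;
  Tmax : nat;
  adj_sym : symmetric adj;
  adj_irr : irreflexive adj;
  lab_sym : forall u v, lab u v = lab v u;
  lab_range : forall u v, adj u v -> (1 <= lab u v <= Tmax)%N
}.

Section Infection.
Variables (V : finType) (G : tgraph V) (delta : nat).

Definition infectious (it : V -> option int) (u : V) (t : int) : Prop :=
  exists tu, it u = Some tu /\ tu < t /\ t <= tu + delta%:Z.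

Definition can_infect (it : V -> option int) (v : V) (t : int) : Prop :=
  exists u, adj G u v /\ (lab G u v)%:Z = t /\ infectious it u t.

(* A valid round with the single seed (s, t0): [it] gives the infection time
   of each node (None = never infected), [log a b t] is the infection log
   ("a infected b at time t"). *)
Definition valid_round (s : V) (t0 : int) (it : V -> option int)
    (log : V -> V -> int -> Prop) : Prop :=
  [/\ it s = Some t0,
      (forall v t, v != s ->
         (it v = Some t <-> (can_infect it v t /\
                             forall t', t' < t -> ~ can_infect it v t'))),
      (forall a b t, log a b t ->
         [/\ b != s, it b = Some t, adj G a b, (lab G a b)%:Z = t
           & infectious it a t]) &
      (forall b t, b != s -> it b = Some t ->
         exists a, log a b t /\ forall a', log a' b t -> a' = a)].

Definition valid_logs (log_of : V -> int -> V -> V -> int -> Prop) : Prop :=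
  forall s t0, exists it, valid_round s t0 it (log_of s t0).

(* ceil(Tmax / delta) for delta >= 1 *)
Definition nrounds : nat := ((Tmax G + delta.-1) %/ delta)%N.

(* The set of seeds (u, t') of the rounds performed by Follow started at v0,
   when the round with seed (s,t0) produces the log [log_of s t0].
   - Follow performs rounds (v0, i*delta), i = 0..ceil(Tmax/delta);
   - every performed round with seed u (whether performed by Follow or by
     a call Explore(u,.)) triggers, for each successful infection along an
     edge uw at time t'' in its log, a call Explore(w, t''), which performs
     (if not yet performed) the rounds with seeds (w,t''-delta-1), (w,t''-1),
     (w,t'').  Rounds are never repeated, so the set of performed rounds is
     the least set closed under these rules. *)
Inductive performed (log_of : V -> int -> V -> V -> int -> Prop) (v0 : V)
  : V -> int -> Prop :=
| perf_follow (i : nat) :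
    (i <= nrounds)%N -> performed log_of v0 v0 (i * delta)%:Z
| perf_explore (u : V) (s : int) (w : V) (t'' t' : int) :
    performed log_of v0 u s -> log_of u s u w t'' ->
    t' \in [:: t'' - delta%:Z - 1; t'' - 1; t''] ->
    performed log_of v0 w t'.

End Infection.

From mathcomp Require Import all_boot all_order all_algebra.
From mathcomp Require Import zify.
From Stdlib Require Import Classical.
Import Order.TTheory GRing.Theory Num.Theory.
Local Open Scope ring_scope.
Set Implicit Arguments. Unset Strict Implicit.

(* In the round seeded at (v, t), w could be infected along vw at time
   lab(vw), so it is infected at some tw <= lab(vw).  If its infector is not
   v, following infectors back to the seed yields a neighbour x infected by v
   at some l with t < l < lab(vw).  Explore(x, l) seeds x at l - 1, and x then
   infects v exactly at l; so v is seeded again at l, strictly closer to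
   lab(vw), and we conclude by induction on lab(vw) - t. *)

Section Infection.
Variables (V : finType) (G : tgraph V) (delta : nat).

Lemma can_infect_gt0 it b T : can_infect G delta it b T -> 0 < T.
Proof. by case=> u [/lab_range/andP[lab_gt0 _] [<- _]]; lia. Qed.

Section Round.
Variables (s : V) (t0 : int) (it : V -> option int) (log : V -> V -> int -> Prop).
Hypothesis round : valid_round G delta s t0 it log.

Lemma infected_gt0 b tb : b != s -> it b = Some tb -> 0 < tb.
Proof. by case: round => _ hit _ _ bs /(hit _ _ bs) [/can_infect_gt0]. Qed.

Lemma seed_infects_before b tb : b != s -> it b = Some tb ->
  exists x l, log s x l /\ t0 < l <= tb.
Proof.
case: round => its _ hlog hex.
have [n] := ubnP `|tb|%N; elim: n b tb => // n IHn b tb le_tb bs itb.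
have [a [log_ab _]] := hex b tb bs itb.
have [_ _ _ _ [ta [ita [lt_ta _]]]] := hlog _ _ _ log_ab.
have [a_s | a_s] := eqVneq a s.
  exists b, tb; split; first by rewrite -a_s.
  by move: ita; rewrite a_s its => -[t0_ta]; lia.
have [|x [l [log_sx le_l]]] := IHn a ta _ a_s ita.
  by have := infected_gt0 a_s ita; lia.
by exists x, l; split => //; lia.
Qed.

Lemma infected_no_later b T : b != s -> can_infect G delta it b T ->
  exists2 tb, it b = Some tb & tb <= T.
Proof.
case: round => _ hit _ _ bs.
have [n] := ubnP `|T|%N; elim: n T => // n IHn T le_T chance.
have [[T' [lt_T' chance']] | earliest] :=
  classic (exists T', T' < T /\ can_infect G delta it b T').
  have [|tb itb le_tb] := IHn T' _ chance'.
    by have := can_infect_gt0 chance'; lia.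
  by exists tb => //; lia.
exists T => //; apply/(hit b T bs); split => // T' lt_T' chance'.
by apply: earliest; exists T'.
Qed.

Lemma seed_infects_at_succ v : (0 < delta)%N -> adj G s v ->
  (lab G s v)%:Z = t0 + 1 -> log s v (t0 + 1).
Proof.
case: round => its hit hlog hex delta_gt0 sv lab_sv.
have vs : v != s by apply/eqP => vs; move: sv; rewrite vs (adj_irr G).
have itv : it v = Some (t0 + 1).
  apply/(hit v _ vs); split.
    by exists s; split => //; split => //; exists t0; split => //; lia.
  move=> T' lt_T' [u [_ [_ [tu [itu [lt_tu _]]]]]].
  have [u_s | u_s] := eqVneq u s.
    by move: itu; rewrite u_s its => -[t0_tu]; lia.
  by have [x [l [_ le_l]]] := seed_infects_before u_s itu; lia.
have [a [log_av _]] := hex v _ vs itv.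
have [_ _ _ _ [ta [ita [lt_ta _]]]] := hlog _ _ _ log_av.
have [<- // | a_s] := eqVneq a s.
by have [x [l [_ le_l]]] := seed_infects_before a_s ita; lia.
Qed.

End Round.

Section Follow.
Variables (log_of : V -> int -> V -> V -> int -> Prop) (v0 : V).
Hypotheses (delta_gt0 : (0 < delta)%N) (logs : valid_logs G delta log_of).

Lemma performed_bounce v t x l : performed G delta log_of v0 v t ->
  log_of v t v x l -> performed G delta log_of v0 v l.
Proof.
move=> pvt log_vx.
have [it [_ _ hlog _]] := logs v t.
have [_ _ vx lab_vx _] := hlog _ _ _ log_vx.
have pxl : performed G delta log_of v0 x (l - 1).
  by apply: perf_explore pvt log_vx _; rewrite !in_cons eqxx !orbT.
have [it' round'] := logs x (l - 1).
have log_xv : log_of x (l - 1) x v l.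
  have := seed_infects_at_succ round' (v := v) delta_gt0; rewrite subrK.
  by apply; rewrite 1?(adj_sym G) 1?(lab_sym G).
by apply: perf_explore pxl log_xv _; rewrite !in_cons eqxx !orbT.
Qed.

Lemma performed_edge_or_closer v w t : performed G delta log_of v0 v t ->
  adj G v w -> t < (lab G v w)%:Z <= t + delta%:Z ->
  (exists tw, log_of v t v w tw) \/
  exists2 t1, t < t1 < (lab G v w)%:Z & performed G delta log_of v0 v t1.
Proof.
move=> pvt vw /andP[lt_t le_t].
have [it round] := logs v t; case: (round) => itv _ hlog hex.
have wv : w != v by apply/eqP => wv; move: vw; rewrite wv (adj_irr G).
have chance : can_infect G delta it w (lab G v w).
  by exists v; split => //; split => //; exists t.
have [tw itw le_tw] := infected_no_later round wv chance.
have [a [log_aw _]] := hex w tw wv itw.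
have [a_v | a_v] := eqVneq a v; first by subst a; left; exists tw.
have [_ _ _ _ [ta [ita [lt_ta _]]]] := hlog _ _ _ log_aw.
have [x [l [log_vx le_l]]] := seed_infects_before round a_v ita.
by right; exists l; [lia | apply: performed_bounce pvt log_vx].
Qed.

End Follow.
End Infection.

Theorem mainTheorem8 (V : finType) (G : tgraph V) (delta : nat)
    (log_of : V -> int -> V -> V -> int -> Prop) (v0 : V)
    (v w : V) (t : int) :
  (0 < delta)%N ->
  valid_logs G delta log_of ->
  performed G delta log_of v0 v t ->
  adj G v w ->
  t < (lab G v w)%:Z <= t + delta%:Z ->
  exists (x : V) (s : int) (a b : V) (tau : int),
    performed G delta log_of v0 x s /\ log_of x s a b tau /\
    ((a = v /\ b = w) \/ (a = w /\ b = v)).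
Proof.
move=> delta_gt0 logs pvt vw.
have [n] := ubnP `|(lab G v w)%:Z - t|%N.
elim: n t pvt => // n IHn t pvt le_n range.
have [[tw log_vw] | [t1 range1 pvt1]] :=
  performed_edge_or_closer delta_gt0 logs pvt vw range.
  by exists v, t, v, w, tw; split => //; split => //; left.
by move: range range1 => /andP[? ?] /andP[? ?]; apply: IHn pvt1 _ _; lia.
Qed.
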